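(* Let $n,l,k$ be positive integers, let $\mu$ be an order-$(l+k)$ equivalence class and $\epsilon>0$. Fix $(\mathbf{i}^1,\mathbf{j}^1)\in\mu$ with $\mathbf{i}^1\in[n]^l$, $\mathbf{j}^1\in[n]^k$, and let $\gamma^l,\gamma^k$ be the equivalence classes of $\mathbf{i}^1$ and $\mathbf{j}^1$. For $a\in[l],b\in[k]$ let $\mathrm{sgn}(a,b)=+1$ if $\mathbf{i}^2_a=\mathbf{j}^2_b$ for all $(\mathbf{i}^2,\mathbf{j}^2)\in\mu$, and $\mathrm{sgn}(a,b)=-1$ if $\mathbf{i}^2_a\neq\mathbf{j}^2_b$ for all $(\mathbf{i}^2,\mathbf{j}^2)\in\mu$. Define, for $\mathbf{i}\in[n]^l,\mathbf{j}\in[n]^k$, $$\delta(\mathbf{i},\mathbf{j};\mu,\epsilon)=\mathbb{1}_{\mathbf{i}\in\gamma^l}+(1-\epsilon)\mathbb{1}_{\mathbf{i}\notin\gamma^l}+\mathbb{1}_{\mathbf{j}\in\gamma^k}+(1-\epsilon)\mathbb{1}_{\mathbf{j}\notin\gamma^k}+\sum_{a\in[l]}\sum_{b\in[k]}\mathrm{sgn}(a,b)\mathbb{1}_{\mathbf{i}_a=\mathbf{j}_b}.$$ Then for any $\mathbf{i}\in[n]^l$ and $\mathbf{j}\in[n]^k$, $(\mathbf{i},\mathbf{j})\in\mu$ if and only if $\delta(\mathbf{i},\mathbf{j};\mu,\epsilon)$ equals the maximum of $\delta(\cdot,\cdot;\mu,\epsilon)$ over $[n]^l\times[n]^k$.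
   Context: For $m\ge1$, the equivalence relation $\sim$ on $[n]^m$ relates $\mathbf{i}\sim\mathbf{j}$ iff $(i_1,\dots,i_m)=(\pi(j_1),\dots,\pi(j_m))$ for some $\pi\in S_n$; an order-$m$ equivalence class is an element of $[n]^m/_\sim$. All elements of one class share the same equality pattern among their entries, so $\mathrm{sgn}(a,b)$ is well defined. $(\mathbf{i},\mathbf{j})$ denotes concatenation of multi-indices. *)

From mathcomp Require Import all_boot all_order all_algebra all_fingroup.
Set Implicit Arguments. Unset Strict Implicit. Unset Printing Implicit Defensive.
Import Order.TTheory GRing.Theory Num.Theory.
Local Open Scope ring_scope.

Definition midx (n m : nat) := {ffun 'I_m -> 'I_n}.

Definition midx_equiv (n m : nat) (i j : midx n m) : bool :=
  [exists s : {perm 'I_n}, [forall t, i t == s (j t)]].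

Definition eqclass (n m : nat) (i : midx n m) : {set midx n m} :=
  [set j | midx_equiv j i].

Definition is_eqclass (n m : nat) (mu : {set midx n m}) : Prop :=
  exists i : midx n m, mu = eqclass i.

Definition concat (n l k : nat) (i : midx n l) (j : midx n k) : midx n (l + k) :=
  [ffun t : 'I_(l + k) => match split t with inl a => i a | inr b => j b end].

(* sgn(a,b): +1 if i_a = j_b for all (i,j) in mu, -1 if i_a <> j_b for all
   (i,j) in mu (0 otherwise; never happens for an equivalence class) *)
Definition sgn (R : numDomainType) (n l k : nat) (mu : {set midx n (l + k)})
  (a : 'I_l) (b : 'I_k) : R :=
  if [forall x in mu, x (lshift k a) == x (rshift l b)] then 1
  else if [forall x in mu, x (lshift k a) != x (rshift l b)] then -1
  else 0.

(* delta(i, j; mu, eps), where gl, gk are the classes of i^1, j^1 *)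
Definition delta (R : numDomainType) (n l k : nat) (mu : {set midx n (l + k)})
  (gl : {set midx n l}) (gk : {set midx n k}) (eps : R)
  (i : midx n l) (j : midx n k) : R :=
  (if i \in gl then 1 else 1 - eps) + (if j \in gk then 1 else 1 - eps)
  + \sum_(a < l) \sum_(b < k) sgn R mu a b * (i a == j b)%:R.

From mathcomp Require Import all_boot all_order all_algebra all_fingroup.
Import Order.TTheory GRing.Theory Num.Theory.
Local Open Scope ring_scope.
Set Implicit Arguments. Unset Strict Implicit. Unset Printing Implicit Defensive.

(* Two multi-indices are equivalent iff they have the same equality pattern,
   since a relabelling of [n] that is injective on the entries of one of them
   extends to a permutation of [n].  So if mu is the class of (i1, j1), then
   sgn(a, b) is +1 or -1 according as i1_a = j1_b or not, and each summand of
   delta(i, j) is bounded by its value at (i1, j1), with equality iff (i, j)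
   agrees with (i1, j1) on the corresponding part of the equality pattern. *)

Lemma perm_of_kernel_in (I : eqType) (T : finType) (x y : I -> T) (r : seq I) :
    {in r &, forall s t, (x s == x t) = (y s == y t)} ->
  exists p : {perm T}, {in r, forall t, x t = p (y t)}.
Proof.
elim: r => [|t r IHr] kerxy; first by exists 1%g.
have [|p xpy] := IHr; first by move=> s u sr ur; apply: kerxy; rewrite inE ?sr ?ur orbT.
exists (p * tperm (p (y t)) (x t))%g => u; rewrite inE permM => /predU1P[->|ur].
  by rewrite tpermL.
have kerut : (x u == x t) = (y u == y t) by apply: kerxy; rewrite inE ?ur ?eqxx ?orbT.
rewrite -(xpy u ur); have [xut|xut] := eqVneq (x u) (x t).
  have yut : y u = y t by apply/eqP; rewrite -kerut xut.
  by rewrite -yut -(xpy u ur) xut tperm1 perm1.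
symmetry; apply: tpermD; last by rewrite eq_sym.
by rewrite (xpy u ur) (inj_eq perm_inj) eq_sym -kerut.
Qed.

Lemma eqclassP n m (x y : midx n m) :
  reflect (forall s t, (x s == x t) = (y s == y t)) (x \in eqclass y).
Proof.
rewrite inE; apply: (iffP existsP) => [[p /forallP xpy] s t | kerxy].
  by rewrite !(eqP (xpy _)) (inj_eq perm_inj).
have [p xpy] := @perm_of_kernel_in _ _ x y (enum 'I_m) (fun s t _ _ => kerxy s t).
by exists p; apply/forallP => t; rewrite xpy ?mem_enum.
Qed.

Lemma eqclass_refl n m (x : midx n m) : x \in eqclass x.
Proof. by apply/eqclassP => s t. Qed.

Lemma is_eqclass_mem n m (mu : {set midx n m}) (x : midx n m) :
  is_eqclass mu -> x \in mu -> mu = eqclass x.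
Proof.
move=> [y ->] /eqclassP kerxy; apply/setP => z.
by apply/eqclassP/eqclassP => kerz s t; rewrite kerz kerxy.
Qed.

Lemma concat_lshift n l k (i : midx n l) (j : midx n k) a : concat i j (lshift k a) = i a.
Proof. by rewrite ffunE (unsplitK (inl _ : 'I_l + 'I_k)). Qed.

Lemma concat_rshift n l k (i : midx n l) (j : midx n k) b : concat i j (rshift l b) = j b.
Proof. by rewrite ffunE (unsplitK (inr _ : 'I_l + 'I_k)). Qed.

Lemma concat_eqclassP n l k (i i' : midx n l) (j j' : midx n k) :
  reflect [/\ i \in eqclass i', j \in eqclass j' & forall a b, (i a == j b) = (i' a == j' b)]
          (concat i j \in eqclass (concat i' j')).
Proof.
apply: (iffP (eqclassP _ _)) => [ker | [/eqclassP keri /eqclassP kerj kerij] s t].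
  split; [apply/eqclassP => a a' | apply/eqclassP => b b' | move=> a b].
  - by have := ker (lshift k a) (lshift k a'); rewrite !concat_lshift.
  - by have := ker (rshift l b) (rshift l b'); rewrite !concat_rshift.
  - by have := ker (lshift k a) (rshift l b); rewrite !concat_lshift !concat_rshift.
rewrite !ffunE; case: (split s) => a; case: (split t) => b //.
by rewrite eq_sym kerij eq_sym.
Qed.

Lemma sgn_eqclass_concat (R : numDomainType) n l k (i1 : midx n l) (j1 : midx n k) a b :
  sgn R (eqclass (concat i1 j1)) a b = if i1 a == j1 b then 1 else -1.
Proof.
have cross x : x \in eqclass (concat i1 j1) ->
    (x (lshift k a) == x (rshift l b)) = (i1 a == j1 b).
  by move/eqclassP->; rewrite concat_lshift concat_rshift.
rewrite /sgn; case: (boolP (i1 a == j1 b)) => e.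
  by rewrite ifT //; apply/forall_inP => x /cross->.
rewrite ifF ?ifT //; first by apply/forall_inP => x /cross->.
apply/negbTE/forall_inPn; exists (concat i1 j1); first exact: eqclass_refl.
by rewrite cross // eqclass_refl.
Qed.

Lemma signed_indicator_leif (R : numDomainType) (u v : bool) :
  (if v then 1 else -1) * u%:R <= (if v then 1 else -1) * v%:R ?= iff (u == v) :> R.
Proof.
by apply/leifP; case: u; case: v; rewrite /= ?mulr1 ?mulr0 ?eqxx ?ltrN10 ?ltr01.
Qed.

Lemma penalty_leif (R : numDomainType) (eps : R) (b : bool) :
  0 < eps -> (if b then 1 else 1 - eps) <= 1 ?= iff b.
Proof. by move=> eps_gt0; apply/leifP; case: b; rewrite //= gtrDl oppr_lt0. Qed.

Lemma delta_leif (R : numDomainType) n l k (i1 i : midx n l) (j1 j : midx n k) (eps : R) :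
  0 < eps ->
  let mu := eqclass (concat i1 j1) in
  delta mu (eqclass i1) (eqclass j1) eps i j
    <= delta mu (eqclass i1) (eqclass j1) eps i1 j1 ?= iff (concat i j \in mu).
Proof.
move=> eps_gt0 mu.
have cross_leif : \sum_(a < l) \sum_(b < k) sgn R mu a b * (i a == j b)%:R
    <= \sum_(a < l) \sum_(b < k) sgn R mu a b * (i1 a == j1 b)%:R
    ?= iff [forall a, [forall b, (i a == j b) == (i1 a == j1 b)]].
  apply: leif_sum => a _; apply: leif_sum => b _.
  by rewrite sgn_eqclass_concat; apply: signed_indicator_leif.
have -> : (concat i j \in mu) = [&& i \in eqclass i1, j \in eqclass j1
            & [forall a, [forall b, (i a == j b) == (i1 a == j1 b)]]].
  apply/concat_eqclassP/and3P => [[-> -> cross]|[-> -> /forallP cross]].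
    by split=> //; apply/forallP => a; apply/forallP => b; rewrite cross.
  by split=> // a b; move/forallP: (cross a) => /(_ b)/eqP.
rewrite /delta (eqclass_refl i1) (eqclass_refl j1) andbA.
exact: leifD (leifD (penalty_leif _ eps_gt0) (penalty_leif _ eps_gt0)) cross_leif.
Qed.

Theorem mainTheorem6 (R : realFieldType) (n l k : nat)
  (mu : {set midx n (l + k)}) (eps : R)
  (i1 : midx n l) (j1 : midx n k) :
  (0 < n)%N -> (0 < l)%N -> (0 < k)%N ->
  is_eqclass mu -> 0 < eps ->
  concat i1 j1 \in mu ->
  forall (i : midx n l) (j : midx n k),
    concat i j \in mu <->
    (forall (i' : midx n l) (j' : midx n k),
        delta mu (eqclass i1) (eqclass j1) eps i' j'
        <= delta mu (eqclass i1) (eqclass j1) eps i j).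
Proof.
move=> _ _ _ mu_class eps_gt0 x1_mu i j.
rewrite (is_eqclass_mem mu_class x1_mu).
have [le_ij eq_ij] := delta_leif i1 i j1 j eps_gt0.
split=> [ij_mu i' j' | ij_max].
  move: eq_ij; rewrite ij_mu => /eqP->.
  exact: (delta_leif i1 i' j1 j' eps_gt0).1.
by rewrite -eq_ij eq_le le_ij ij_max.
Qed.
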